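(* Let $g\in C(\mathbb{R},\mathbb{R})$ and $\mathcal{G}=(g,\infty)=\{f\in C(\mathbb{R},\mathbb{R}):(\forall x\in\mathbb{R})\,f(x)>g(x)\}$. Then $\mathcal{K}_\mathcal{G}=\{\mathrm{CL}(\mathbb{R})\cap\mathcal{P}(X):X\subseteq\mathbb{R}\}$.
   Context: $\mathrm{CL}(\mathbb{R})$ is the family of closed subsets of $\mathbb{R}$ and $\mathcal{P}(X)$ the power set of $X$. For $\mathcal{G}\subseteq C(\mathbb{R},\mathbb{R})$ let $R_\mathcal{G}=\{(f,E)\in C(\mathbb{R},\mathbb{R})\times\mathrm{CL}(\mathbb{R}):(\exists h\in\mathcal{G})\, f\restriction E=h\restriction E\}$; for $\mathcal{F}\subseteq C(\mathbb{R},\mathbb{R})$ put $E_\mathcal{G}(\mathcal{F})=\{E\in\mathrm{CL}(\mathbb{R}):(\forall f\in\mathcal{F})\,(f,E)\in R_\mathcal{G}\}$, and let $\mathcal{K}_\mathcal{G}=\{E_\mathcal{G}(\mathcal{F}):\mathcal{F}\subseteq C(\mathbb{R},\mathbb{R})\}$. *)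

From Stdlib Require Import Reals.
Open Scope R_scope.

(* C(R,R) is represented by functions R -> R with the predicate [continuity];
   subsets of R are predicates R -> Prop; CL(R) = those satisfying [closed_set]. *)

Definition R_G (G : (R -> R) -> Prop) (f : R -> R) (E : R -> Prop) : Prop :=
  continuity f /\ closed_set E /\
  exists h, G h /\ forall x, E x -> f x = h x.

Definition E_G (G : (R -> R) -> Prop) (F : (R -> R) -> Prop) : (R -> Prop) -> Prop :=
  fun E => closed_set E /\ forall f, F f -> R_G G f E.

Definition K_G (G : (R -> R) -> Prop) : ((R -> Prop) -> Prop) -> Prop :=
  fun S => exists F : (R -> R) -> Prop,
    (forall f, F f -> continuity f) /\ S = E_G G F.

Definition above (g : R -> R) : (R -> R) -> Prop :=
  fun f => continuity f /\ forall x, f x > g x.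

(* A continuous f extends from a closed set E to a function strictly above g
   iff f > g on E: take g + |f - g| + dist(., E), which agrees with f on E and
   exceeds g off E because dist(., E) > 0 there.  Hence E_G(F) consists of the
   closed subsets of the set X_F of points where every f in F exceeds g.
   Conversely every X arises this way, from the family of "tents"
   g + |. - a| with a outside X: each exceeds g except at its apex a. *)
From Stdlib Require Import Reals Lra Classical FunctionalExtensionality PropExtensionality.
Open Scope R_scope.

Section DistanceToSet.

Variable E : R -> Prop.
Hypothesis E_nonempty : exists y, E y.

Definition neg_dists (x : R) : R -> Prop :=
  fun z => exists y, E y /\ z = - Rabs (x - y).

Lemma neg_dists_bound (x : R) : bound (neg_dists x).
Proof. exists 0; intros z [y [_ ->]]; pose proof (Rabs_pos (x - y)); lra. Qed.

Lemma neg_dists_nonempty (x : R) : exists z, neg_dists x z.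
Proof.
  destruct E_nonempty as [y Ey].
  exists (- Rabs (x - y)), y; split; auto.
Qed.

Definition dist_set (x : R) : R :=
  - proj1_sig (completeness (neg_dists x) (neg_dists_bound x) (neg_dists_nonempty x)).

Lemma dist_set_lub (x : R) : is_lub (neg_dists x) (- dist_set x).
Proof. unfold dist_set; rewrite Ropp_involutive; apply proj2_sig. Qed.

Lemma dist_set_ge0 (x : R) : 0 <= dist_set x.
Proof.
  destruct (dist_set_lub x) as [_ lub_le].
  enough (- dist_set x <= 0) by lra.
  apply lub_le; intros z [y [_ ->]]; pose proof (Rabs_pos (x - y)); lra.
Qed.

Lemma dist_set_eq0 (x : R) : E x -> dist_set x = 0.
Proof.
  intros Ex; destruct (dist_set_lub x) as [ub _].
  assert (0 <= - dist_set x).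
  { apply ub; exists x; split; auto; rewrite Rminus_diag, Rabs_R0; lra. }
  pose proof (dist_set_ge0 x); lra.
Qed.

Lemma dist_set_gt0 (x : R) : closed_set E -> ~ E x -> 0 < dist_set x.
Proof.
  intros closedE nEx; destruct (closedE x nEx) as [del ball_outside].
  destruct (dist_set_lub x) as [_ lub_le].
  enough (- dist_set x <= - del) by (pose proof (cond_pos del); lra).
  apply lub_le; intros z [y [Ey ->]].
  destruct (Rlt_or_le (Rabs (y - x)) del) as [near | far].
  - destruct (ball_outside y near Ey).
  - rewrite Rabs_minus_sym in far; lra.
Qed.

Lemma dist_set_lipschitz (x x' : R) : dist_set x <= dist_set x' + Rabs (x - x').
Proof.
  destruct (dist_set_lub x) as [ub _]; destruct (dist_set_lub x') as [_ lub_le].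
  enough (- dist_set x' <= - dist_set x + Rabs (x - x')) by lra.
  apply lub_le; intros z [y [Ey ->]].
  assert (- Rabs (x - y) <= - dist_set x) by (apply ub; exists y; auto).
  pose proof (Rabs_triang (x - x') (x' - y)).
  replace (x - x' + (x' - y)) with (x - y) in * by ring; lra.
Qed.

Lemma continuity_dist_set : continuity dist_set.
Proof.
  intros x eps eps_pos; exists eps; split; auto.
  intros x' [_ close]; simpl in *; unfold R_dist in *.
  pose proof (dist_set_lipschitz x x'); pose proof (dist_set_lipschitz x' x).
  rewrite (Rabs_minus_sym x x') in *; apply Rabs_def1; lra.
Qed.

End DistanceToSet.

Lemma continuity_plus_abs_sub (g f : R -> R) :
  continuity g -> continuity f -> continuity (fun x => g x + Rabs (f x - g x)).
Proof.
  intros cont_g cont_f.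
  apply (continuity_plus g (fun x => Rabs (f x - g x))); auto.
  apply (continuity_comp (fun x => f x - g x) Rabs), Rcontinuity_abs.
  apply continuity_minus; auto.
Qed.

Lemma extension_above (g f : R -> R) (E : R -> Prop) :
  continuity g -> continuity f -> closed_set E -> (forall x, E x -> g x < f x) ->
  exists h, above g h /\ forall x, E x -> f x = h x.
Proof.
  intros cont_g cont_f closedE f_above.
  destruct (classic (exists y, E y)) as [E_nonempty | E_empty].
  - set (d := dist_set E E_nonempty).
    assert (on_E : forall x, E x -> g x + Rabs (f x - g x) + d x = f x).
    { intros x Ex; unfold d; rewrite dist_set_eq0 by auto.
      specialize (f_above x Ex); rewrite Rabs_right by lra; lra. }
    exists (fun x => g x + Rabs (f x - g x) + d x); repeat split.
    + apply (continuity_plus (fun x => g x + Rabs (f x - g x)) d).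
      * apply continuity_plus_abs_sub; auto.
      * apply continuity_dist_set.
    + intros x; destruct (classic (E x)) as [Ex | nEx].
      * specialize (f_above x Ex); rewrite on_E by auto; lra.
      * pose proof (dist_set_gt0 E E_nonempty x closedE nEx).
        pose proof (Rabs_pos (f x - g x)); unfold d; lra.
    + intros x Ex; rewrite on_E; auto.
  - exists (fun x => g x + 1); repeat split.
    + apply (continuity_plus g (fun _ => 1)); auto.
      apply continuity_const; intros a b; auto.
    + intros x; lra.
    + intros x Ex; destruct E_empty; eauto.
Qed.

Lemma R_G_above_iff (g f : R -> R) (E : R -> Prop) :
  continuity g -> continuity f -> closed_set E ->
  R_G (above g) f E <-> forall x, E x -> g x < f x.
Proof.
  intros cont_g cont_f closedE; split.
  - intros (_ & _ & h & [_ h_above] & f_eq_h) x Ex.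
    rewrite f_eq_h by auto; apply h_above.
  - intros f_above; repeat split; auto.
    apply extension_above; auto.
Qed.

Definition exceeding_points (g : R -> R) (F : (R -> R) -> Prop) : R -> Prop :=
  fun x => forall f, F f -> g x < f x.

Lemma E_G_above (g : R -> R) (F : (R -> R) -> Prop) :
  continuity g -> (forall f, F f -> continuity f) ->
  E_G (above g) F = (fun E => closed_set E /\ included E (exceeding_points g F)).
Proof.
  intros cont_g cont_F.
  apply functional_extensionality; intros E; apply propositional_extensionality.
  split.
  - intros [closedE R_G_all]; split; auto.
    intros x Ex f Ff; apply (R_G_above_iff g f E); auto.
  - intros [closedE E_exceeding]; split; auto.
    intros f Ff; apply R_G_above_iff; auto.
    intros x Ex; apply E_exceeding; auto.
Qed.

Definition tent (g : R -> R) (a : R) : R -> R := fun x => g x + Rabs (x - a).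

Lemma continuity_tent (g : R -> R) (a : R) : continuity g -> continuity (tent g a).
Proof.
  intros cont_g; apply (continuity_plus g (fun x => Rabs (x - a))); auto.
  apply (continuity_comp (fun x => x - a) Rabs), Rcontinuity_abs.
  apply (continuity_minus id (fun _ => a)).
  - apply derivable_continuous, derivable_id.
  - apply continuity_const; intros u v; auto.
Qed.

Definition tents_outside (g : R -> R) (X : R -> Prop) : (R -> R) -> Prop :=
  fun f => exists a, ~ X a /\ f = tent g a.

Lemma exceeding_points_tents_outside (g : R -> R) (X : R -> Prop) :
  exceeding_points g (tents_outside g X) = X.
Proof.
  apply functional_extensionality; intros x; apply propositional_extensionality.
  unfold exceeding_points, tents_outside, tent; split.
  - intros exceeds; apply NNPP; intros nXx.
    specialize (exceeds _ (ex_intro _ x (conj nXx eq_refl))); simpl in exceeds.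
    rewrite Rminus_diag, Rabs_R0 in exceeds; lra.
  - intros Xx f [a [nXa ->]].
    assert (x <> a) by (intros ->; auto).
    assert (0 < Rabs (x - a)) by (apply Rabs_pos_lt; lra); lra.
Qed.

Theorem theorem4p1 (g : R -> R) (hg : continuity g) :
  forall S : (R -> Prop) -> Prop,
    K_G (above g) S <->
    exists X : R -> Prop, S = (fun E => closed_set E /\ included E X).
Proof.
  intros S; split.
  - intros [F [cont_F ->]].
    exists (exceeding_points g F); apply E_G_above; auto.
  - intros [X ->].
    assert (cont_tents : forall f, tents_outside g X f -> continuity f).
    { intros f [a [_ ->]]; apply continuity_tent; auto. }
    exists (tents_outside g X); split; auto.
    rewrite E_G_above, exceeding_points_tents_outside; auto.
Qed.
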